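(* Let $\mu,\nu$ be subdistributions over nondeterministic expressions with $\mu\Rightarrow\nu$. Then there is a subdistribution $\rho$ with $\rho\le\mu$ and $\rho\le\nu$ such that $\mu-\rho\xRightarrow{\tau}\nu-\rho$.
   Context: Fix a set $\mathsf{Act}$ of actions containing $\tau$. Nondeterministic expressions: $E ::= 0 \mid X \mid \alpha.P \mid \mathrm{rec}\,X.E \mid E + E$; probabilistic expressions: $P ::= \partial(E) \mid P \oplus_p P$ ($0<p<1$). Subdistributions $\mu$ over $S$: $\mu:S\to\mathbb R_{\ge0}$ with $|\mu|=\sum\mu(s)\le1$; $\delta_s$ Dirac; sums, differences and $\le$ pointwise. Semantics: least relations with $\partial(E)\mapsto\delta_E$; $P\oplus_pQ\mapsto p\mu+(1-p)\nu$ if $P\mapsto\mu,Q\mapsto\nu$; $\alpha.P\xrightarrow{\alpha}\mu$ if $P\mapsto\mu$; $\mathrm{rec}\,X.E\xrightarrow{\alpha}\mu$ if $E[\mathrm{rec}\,X.E/X]\xrightarrow{\alpha}\mu$; $E+F\xrightarrow{\alpha}\mu$ and $F+E\xrightarrow{\alpha}\mu$ if $E\xrightarrow{\alpha}\mu$. Combined transitions on subdistributions: least relation with $\delta_E\xrightarrow{\alpha}\mu$ if $E\xrightarrow{\alpha}\mu$, closed under $\sum p_i\nu_i\xrightarrow{\alpha}\sum p_i\mu_i$ ($\nu_i\xrightarrow{\alpha}\mu_i$, $p_i\ge0$, $\sum p_i\le1$). A derivation is a sequence $(\mu_i^{\to},\mu_i^{\times})_{i\in\mathbb N}$ of subdistributions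 with $\mu_i^{\to}\xrightarrow{\tau}\mu^{\to}_{i+1}+\mu^{\times}_{i+1}$ for all $i$; $\mu\Rightarrow\nu$ iff some derivation has $\mu=\mu_0^{\to}+\mu_0^{\times}$ and $\nu=\sum_i\mu_i^\times$. $\mu\xRightarrow{\tau}\nu$ iff $\mu\Rightarrow\rho\xrightarrow{\tau}\eta\Rightarrow\nu$ for some $\rho,\eta$. *)

From Stdlib Require Import Reals Lra List Arith ClassicalEpsilon.
Open Scope R_scope.

Section PCCS.

Variable Act : Type.
Variable tau : Act.

Definition prob := { p : R | 0 < p /\ p < 1 }.

(* Syntax, with recursion variables as de Bruijn indices (Var n),
   so that substitution is capture-avoiding.  Rec E binds index 0 in E. *)
Inductive Expr : Type :=
| Nil : Expr
| Var : nat -> Expr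
| Pre : Act -> Prob -> Expr
| Rec : Expr -> Expr
| Plus : Expr -> Expr -> Expr
with Prob : Type :=
| Dirac : Expr -> Prob
| PChoice : prob -> Prob -> Prob -> Prob.

Fixpoint liftE (c : nat) (E : Expr) : Expr :=
  match E with
  | Nil => Nil
  | Var n => if Nat.ltb n c then Var n else Var (S n)
  | Pre a P => Pre a (liftP c P)
  | Rec F => Rec (liftE (S c) F)
  | Plus F G => Plus (liftE c F) (liftE c G)
  end
with liftP (c : nat) (P : Prob) : Prob :=
  match P with
  | Dirac E => Dirac (liftE c E)
  | PChoice p P Q => PChoice p (liftP c P) (liftP c Q)
  end.

(* substE k F E = E[F / k] (indices above k are decremented). *)
Fixpoint substE (k : nat) (F : Expr) (E : Expr) : Expr :=
  match E with
  | Nil => Nil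
  | Var n => if Nat.eqb n k then F
             else if Nat.ltb k n then Var (pred n) else Var n
  | Pre a P => Pre a (substP k F P)
  | Rec G => Rec (substE (S k) (liftE 0 F) G)
  | Plus G H => Plus (substE k F G) (substE k F H)
  end
with substP (k : nat) (F : Expr) (P : Prob) : Prob :=
  match P with
  | Dirac E => Dirac (substE k F E)
  | PChoice p P Q => PChoice p (substP k F P) (substP k F Q)
  end.

(* Subdistributions over Expr: nonnegative functions of total mass <= 1
   (the total mass of a nonnegative function being the sup of its finite sums). *)
Definition subdist := Expr -> R.

Definition is_subdist (mu : subdist) : Prop :=
  (forall s, 0 <= mu s) /\
  (forall l : list Expr, NoDup l -> fold_right Rplus 0 (map mu l) <= 1).

Definition delta (E : Expr) : subdist :=
  fun E' => if excluded_middle_informative (E' = E) then 1 else 0.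

Definition sd_add (mu nu : subdist) : subdist := fun s => mu s + nu s.
Definition sd_sub (mu nu : subdist) : subdist := fun s => mu s - nu s.
Definition sd_scale (p : R) (mu : subdist) : subdist := fun s => p * mu s.
Definition sd_le (mu nu : subdist) : Prop := forall s, mu s <= nu s.

Inductive pden : Prob -> subdist -> Prop :=
| pden_dirac E : pden (Dirac E) (delta E)
| pden_choice (p : prob) P Q mu nu :
    pden P mu -> pden Q nu ->
    pden (PChoice p P Q) (sd_add (sd_scale (proj1_sig p) mu) (sd_scale (1 - proj1_sig p) nu)).

Inductive step : Expr -> Act -> subdist -> Prop :=
| step_pre a P mu : pden P mu -> step (Pre a P) a mu
| step_rec E a mu : step (substE 0 (Rec E) E) a mu -> step (Rec E) a mu
| step_plusL E F a mu : step E a mu -> step (Plus E F) a mu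
| step_plusR E F a mu : step E a mu -> step (Plus F E) a mu.

(* Combined transitions on subdistributions: least relation containing
   delta_E --a--> mu for E --a--> mu, closed under (countable) convex
   combinations  sum_i p_i nu_i --a--> sum_i p_i mu_i  with p_i >= 0,
   sum_i p_i <= 1.  Sums are pointwise series. *)
Inductive cstep : subdist -> Act -> subdist -> Prop :=
| cstep_base E a mu : step E a mu -> cstep (delta E) a mu
| cstep_comb a (p : nat -> R) (nus mus : nat -> subdist) (nu mu : subdist) :
    (forall i, 0 <= p i) ->
    (forall n, sum_f_R0 p n <= 1) ->
    (forall i, cstep (nus i) a (mus i)) ->
    (forall s, infinite_sum (fun i => p i * nus i s) (nu s)) ->
    (forall s, infinite_sum (fun i => p i * mus i s) (mu s)) ->
    cstep nu a mu.

Definition derivation (mu_to mu_x : nat -> subdist) : Prop :=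
  (forall i, is_subdist (mu_to i)) /\ (forall i, is_subdist (mu_x i)) /\
  (forall i, cstep (mu_to i) tau (sd_add (mu_to (S i)) (mu_x (S i)))).

Definition wstep (mu nu : subdist) : Prop :=
  exists mu_to mu_x : nat -> subdist,
    derivation mu_to mu_x /\
    (forall s, mu s = mu_to 0%nat s + mu_x 0%nat s) /\
    (forall s, infinite_sum (fun i => mu_x i s) (nu s)).

Definition wtau (mu nu : subdist) : Prop :=
  exists rho eta, wstep mu rho /\ cstep rho tau eta /\ wstep eta nu.

End PCCS.

(* Take rho to be mu_0^x, the part of mu that a derivation witnessing mu ==> nu
   stops at once.  The remainder mu - rho is mu_0^->, which performs the first
   tau-step to mu_1^-> + mu_1^x, and the derivation shifted by one index takes
   this on to nu - mu_0^x.  The weak step mu_0^-> ==> mu_0^-> in front of the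
   tau-step is the derivation that stops everything immediately. *)

From Stdlib Require Import Reals Lra Lia FunctionalExtensionality.
Open Scope R_scope.

Lemma sum_f_R0_shift (f : nat -> R) (n : nat) :
  sum_f_R0 (fun i => f (S i)) n = sum_f_R0 f (S n) - f 0%nat.
Proof. rewrite (decomp_sum f (S n)) by lia. simpl. ring. Qed.

Lemma infinite_sum_shift (f : nat -> R) (l : R) :
  infinite_sum f l -> infinite_sum (fun i => f (S i)) (l - f 0%nat).
Proof.
  intros Hf eps Heps. destruct (Hf eps Heps) as [N HN].
  exists N. intros n Hn. rewrite sum_f_R0_shift. unfold Rdist.
  replace (sum_f_R0 f (S n) - f 0%nat - (l - f 0%nat)) with (sum_f_R0 f (S n) - l)
    by ring.
  apply HN. lia.
Qed.

Lemma infinite_sum_single (f : nat -> R) :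
  (forall i, f (S i) = 0) -> infinite_sum f (f 0%nat).
Proof.
  intros Hf eps Heps. exists 0%nat. intros n _.
  assert (Hsum : sum_f_R0 f n = f 0%nat).
  { induction n as [|n IH]; simpl; [reflexivity|]. rewrite IH, Hf. ring. }
  rewrite Hsum, Rdist_eq. lra.
Qed.

Lemma infinite_sum_mul_0 (g : nat -> R) : infinite_sum (fun i => 0 * g i) 0.
Proof.
  intros eps Heps. exists 0%nat. intros n _.
  rewrite sum_eq_R0 by (intros; ring). rewrite Rdist_eq. lra.
Qed.

Section WeakTransitions.

Variable Act : Type.
Variable tau : Act.

Lemma is_subdist_0 : is_subdist Act (fun _ => 0).
Proof. split; [intros; lra|]. intros l _. induction l; simpl; lra. Qed.

(* The null subdistribution moves to itself by the combination with all
   weights 0, whose components may be any transitions, e.g. of a.0. *)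
Lemma cstep_0 (a : Act) (nu mu : subdist Act) :
  (forall s, nu s = 0) -> (forall s, mu s = 0) -> cstep Act nu a mu.
Proof.
  intros Hnu Hmu.
  apply (cstep_comb Act a (fun _ => 0)
    (fun _ => delta Act (Pre Act a (Dirac Act (Nil Act))))
    (fun _ => delta Act (Nil Act))).
  - intros; lra.
  - intros n. rewrite sum_eq_R0 by reflexivity. lra.
  - intros i. apply cstep_base, step_pre, pden_dirac.
  - intros s. rewrite Hnu. apply infinite_sum_mul_0.
  - intros s. rewrite Hmu. apply infinite_sum_mul_0.
Qed.

Lemma wstep_refl (mu : subdist Act) : is_subdist Act mu -> wstep Act tau mu mu.
Proof.
  intros Hmu.
  set (stop := fun i : nat => match i with 0%nat => mu | S _ => fun _ => 0 end).
  exists (fun _ _ => 0), stop. split; [split; [|split]|split].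
  - intros; apply is_subdist_0.
  - intros [|i]; [exact Hmu | apply is_subdist_0].
  - intros i. apply cstep_0; intros; unfold sd_add; simpl; lra.
  - intros s. simpl. ring.
  - intros s. exact (infinite_sum_single (fun i => stop i s) (fun _ => eq_refl)).
Qed.

Lemma derivation_tail (mu_to mu_x : nat -> subdist Act) :
  derivation Act tau mu_to mu_x ->
  derivation Act tau (fun i => mu_to (S i)) (fun i => mu_x (S i)).
Proof. intros [Dt [Dx Dc]]. split; [|split]; intros i; [apply Dt | apply Dx | apply Dc]. Qed.

Lemma wstep_tail (mu_to mu_x : nat -> subdist Act) (nu : subdist Act) :
  derivation Act tau mu_to mu_x ->
  (forall s, infinite_sum (fun i => mu_x i s) (nu s)) ->
  wstep Act tau (sd_add Act (mu_to 1%nat) (mu_x 1%nat)) (sd_sub Act nu (mu_x 0%nat)).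
Proof.
  intros Hder Hnu.
  exists (fun i => mu_to (S i)), (fun i => mu_x (S i)).
  split; [apply derivation_tail, Hder | split].
  - intros s. reflexivity.
  - intros s. apply (infinite_sum_shift (fun i => mu_x i s)), Hnu.
Qed.

End WeakTransitions.

Theorem mainTheorem11 (Act : Type) (tau : Act) (mu nu : subdist Act) :
  is_subdist Act mu -> is_subdist Act nu ->
  wstep Act tau mu nu ->
  exists rho : subdist Act,
    is_subdist Act rho /\ sd_le Act rho mu /\ sd_le Act rho nu /\
    wtau Act tau (sd_sub Act mu rho) (sd_sub Act nu rho).
Proof.
  intros _ _ [mu_to [mu_x [Hder [Hmu Hnu]]]].
  pose proof Hder as [Dt [Dx Dc]].
  assert (Hhead : sd_sub Act mu (mu_x 0%nat) = mu_to 0%nat).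
  { extensionality s. unfold sd_sub. rewrite Hmu. ring. }
  exists (mu_x 0%nat). split; [apply Dx | split; [|split]].
  - intros s. rewrite Hmu. destruct (Dt 0%nat) as [Hpos _]. specialize (Hpos s). lra.
  - intros s. apply (sum_incr (fun i => mu_x i s) 0 (nu s) (Hnu s)).
    intros i. apply (Dx i).
  - rewrite Hhead.
    exists (mu_to 0%nat), (sd_add Act (mu_to 1%nat) (mu_x 1%nat)).
    split; [apply wstep_refl, Dt | split; [apply Dc | apply wstep_tail; assumption]].
Qed.
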